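(* Let $r\le n$ and let $A$ be an $r\times n$ matrix over a local ring $(R,\mathfrak{m})$. If all $r\times r$ minors of $A$ vanish and the corank of $A\pmod{\mathfrak{m}}$ is $1$, then the left kernel of $A$ is a free $R$-module of rank $1$.
   Context: The corank of an $r\times n$ matrix (with $r\le n$) over the residue field means $r$ minus its rank; the left kernel of $A$ is $\{v\in R^r: v^TA=0\}$. *)

From HB Require Import structures.
From mathcomp Require Import all_boot all_order all_algebra.
Set Implicit Arguments. Unset Strict Implicit. Unset Printing Implicit Defensive.
Import GRing.Theory.
Local Open Scope ring_scope.

(* A (commutative) local ring: the non-units are closed under addition
   (so they form the unique maximal ideal m). *)
Definition is_local_ring (R : comUnitRingType) : Prop :=
  forall x y : R, x \notin GRing.unit -> y \notin GRing.unit ->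
    x + y \notin GRing.unit.

(* pi : R -> k is a residue map of the local ring R: a surjective ring
   morphism onto the field k whose kernel is exactly the maximal ideal
   m = non-units of R, so that k is (isomorphic to) R/m. *)
Definition residue_map (R : comUnitRingType) (k : fieldType)
  (pi : {rmorphism R -> k}) : Prop :=
  (forall y : k, exists x : R, pi x = y) /\
  (forall x : R, (pi x == 0) = (x \notin GRing.unit)).

Definition corank (k : fieldType) (r n : nat) (B : 'M[k]_(r, n)) : nat :=
  (r - \rank B)%N.

Definition left_kernel (R : comUnitRingType) (r n : nat) (A : 'M[R]_(r, n))
  : pred 'rV[R]_r := fun v => v *m A == 0.

Definition free_rank1 (R : comUnitRingType) (r : nat) (K : pred 'rV[R]_r) : Prop :=
  exists v, [/\ v \in K,
                (forall w, w \in K -> exists c : R, w = c *: v),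
                (forall w, (exists c : R, w = c *: v) -> w \in K) &
                (forall c : R, c *: v = 0 -> c = 0)].

(* The left kernel is spanned by the vector of signed maximal minors of any
   r x (r-1) column submatrix of A: by Laplace expansion, its product with
   column j of A is the r x r minor of A on those columns plus j, which
   vanishes.  Corank 1 modulo m gives such a submatrix with an (r-1) x (r-1)
   minor that is nonzero modulo m, hence a unit in the local ring R; this
   minor is an entry of the minor vector v, and its invertibility makes every
   kernel vector vanishing at that entry zero, whence the kernel is R v. *)

From HB Require Import structures.
From mathcomp Require Import all_boot all_order all_algebra.
From mathcomp Require Import zify.

Set Implicit Arguments.
Unset Strict Implicit.
Unset Printing Implicit Defensive.
Import GRing.Theory.
Local Open Scope ring_scope.

Section FieldMinors.

Variable F : fieldType.

Lemma exists_row'_rank s n (B : 'M[F]_(s.+1, n)) :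
  (\rank B <= s)%N -> exists i0, \rank (row' i0 B) = \rank B.
Proof.
move=> rkB; set g := maxrankfun B.
have [i0 i0_notin_g] : exists i0, i0 \notin codom g.
  apply/existsP; rewrite -negb_forall; apply: contraL rkB => /forallP g_onto.
  have : (#|'I_s.+1| <= #|codom g|)%N.
    by apply: subset_leq_card; apply/subsetP => i _; apply: g_onto.
  by rewrite card_ord card_codom ?card_ord; [rewrite -ltnNge | exact: maxrankfun_inj].
exists i0; apply/eqP; rewrite eqn_leq mxrankS ?row'Esub ?rowsub_sub //=.
rewrite -{1}(eq_maxrowsub B) mxrankS //; apply/row_subP => a.
have /unlift_some[x gaE _] : i0 != g a by apply: contraNneq i0_notin_g => ->; apply: codom_f.
by rewrite row_rowsub -/g gaE -row_rowsub row_sub.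
Qed.

Lemma row_free_colsub_unit s n (C : 'M[F]_(s, n)) :
  row_free C -> exists J : 'I_s -> 'I_n, colsub J C \in unitmx.
Proof.
move=> freeC; have fullCt : row_full C^T by rewrite /row_full mxrank_tr.
exists (fullrankfun fullCt); rewrite -unitmx_tr.
have -> : (colsub (fullrankfun fullCt) C)^T = rowsub (fullrankfun fullCt) C^T.
  by apply/matrixP => a b; rewrite !mxE.
exact: fullrowsub_unit.
Qed.

Lemma corank1_minor_unit s n (B : 'M[F]_(s.+1, n)) :
  \rank B = s -> exists i0 (J : 'I_s -> 'I_n), row' i0 (colsub J B) \in unitmx.
Proof.
move=> rkB; have [i0 rk_row'] := exists_row'_rank (eq_leq rkB).
have [J Ju] : exists J : 'I_s -> 'I_n, colsub J (row' i0 B) \in unitmx.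
  by apply: row_free_colsub_unit; rewrite /row_free rk_row' rkB.
by exists i0, J; congr (_ \in unitmx): Ju; apply/matrixP => a b; rewrite !mxE.
Qed.

End FieldMinors.

Section MaximalMinors.

Variable R : comUnitRingType.

Lemma det_colsub_noninj r n (A : 'M[R]_(r, n)) (f : 'I_r -> 'I_n) :
  ~~ injectiveb f -> \det (colsub f A) = 0.
Proof.
move=> /injectivePn[c1 [c2 c12 fc12]].
by rewrite -det_tr; apply: (determinant_alternate c12) => b; rewrite !mxE fc12.
Qed.

Lemma det_colsub_eq0 r n (A : 'M[R]_(r, n)) :
  (forall f : 'I_r -> 'I_n, injective f -> \det (colsub f A) = 0) ->
  forall f : 'I_r -> 'I_n, \det (colsub f A) = 0.
Proof.
move=> minors0 f; have [/injectiveP|] := boolP (injectiveb f); first exact: minors0.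
exact: det_colsub_noninj.
Qed.

Variables s n : nat.
Implicit Types (A : 'M[R]_(s.+1, n)) (J : 'I_s -> 'I_n).

Definition ext_col J (j : 'I_n) (c : 'I_s.+1) : 'I_n :=
  if unlift ord_max c is Some c' then J c' else j.

Definition minor_vector A J : 'rV[R]_s.+1 :=
  \row_i ((-1) ^+ (i + s) * \det (row' i (colsub J A))).

Lemma mul_minor_vector A J j :
  (minor_vector A J *m A) 0 j = \det (colsub (ext_col J j) A).
Proof.
rewrite mxE (expand_det_col _ ord_max); apply: eq_bigr => i _.
rewrite !mxE /ext_col unlift_none mulrC; congr (_ * (_ * \det _)).
by apply/matrixP => a b; rewrite !mxE liftK.
Qed.

Lemma minor_vector_ker A J :
  (forall f : 'I_s.+1 -> 'I_n, \det (colsub f A) = 0) -> minor_vector A J *m A = 0.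
Proof. by move=> minors0; apply/rowP => j; rewrite mul_minor_vector minors0 mxE. Qed.

End MaximalMinors.

Lemma left_kernelP (R : comUnitRingType) r n (A : 'M[R]_(r, n)) v :
  reflect (v *m A = 0) (v \in left_kernel A).
Proof. by rewrite unfold_in; apply: eqP. Qed.

Lemma mul_col'_row' (R : comUnitRingType) r n (u : 'rV[R]_r.+1)
    (M : 'M[R]_(r.+1, n)) i0 :
  u 0 i0 = 0 -> col' i0 u *m row' i0 M = u *m M.
Proof.
move=> ui0; apply/rowP => j; rewrite !mxE [in RHS](bigD1_ord i0) //= ui0 mul0r add0r.
by apply: eq_bigr => i _; rewrite !mxE.
Qed.

Section LeftKernelRank1.

Variables (R : comUnitRingType) (s n : nat) (A : 'M[R]_(s.+1, n)).
Variables (i0 : 'I_s.+1) (J : 'I_s -> 'I_n).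
Hypothesis minor_unit : row' i0 (colsub J A) \in unitmx.

Lemma left_kernel_eq0_at (u : 'rV[R]_s.+1) : u *m A = 0 -> u 0 i0 = 0 -> u = 0.
Proof.
move=> uA ui0.
have uAJ : u *m colsub J A = 0 by rewrite mulmx_colsub uA; apply/matrixP => a b; rewrite !mxE.
have u'0 : col' i0 u = 0.
  by rewrite -(mulmxK minor_unit (col' i0 u)) mul_col'_row' // uAJ mul0mx.
apply/rowP => i; rewrite [RHS]mxE; have [x ->|->] := unliftP i0 i; last exact: ui0.
by have := congr1 (fun w : 'rV_s => w 0 x) u'0; rewrite !mxE.
Qed.

Lemma free_rank1_left_kernel (v : 'rV[R]_s.+1) :
  v *m A = 0 -> v 0 i0 \is a GRing.unit -> free_rank1 (left_kernel A).
Proof.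
move=> vA vu; exists v; split.
- exact/left_kernelP.
- move=> w /left_kernelP wA; exists (w 0 i0 / v 0 i0); apply/eqP; rewrite -subr_eq0.
  apply/eqP/left_kernel_eq0_at; first by rewrite mulmxBl -scalemxAl vA wA scaler0 subr0.
  by rewrite !mxE divrK ?subrr.
- by move=> w [c ->]; apply/left_kernelP; rewrite -scalemxAl vA scaler0.
- move=> c /(congr1 (fun w : 'rV_s.+1 => w 0 i0)); rewrite !mxE => cv0.
  by rewrite -[c](mulrK vu) cv0 mul0r.
Qed.

End LeftKernelRank1.

Lemma residue_unitmx (R : comUnitRingType) (k : fieldType) (pi : {rmorphism R -> k})
    m (M : 'M[R]_m) :
  residue_map pi -> (map_mx pi M \in unitmx) = (M \in unitmx).
Proof. by case=> _ pi0; rewrite !unitmxE det_map_mx unitfE pi0 negbK. Qed.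

Theorem lemma4p2p2 (R : comUnitRingType) (k : fieldType)
  (pi : {rmorphism R -> k}) (r n : nat) (A : 'M[R]_(r, n)) :
  is_local_ring R ->
  residue_map pi ->
  (r <= n)%N ->
  (forall f : 'I_r -> 'I_n, injective f -> \det (colsub f A) = 0) ->
  corank (map_mx pi A) = 1%N ->
  free_rank1 (left_kernel A).
Proof.
move=> _ piR _; case: r A => [|s] A minors0; first by rewrite /corank sub0n.
rewrite /corank => corank1.
have rkA : \rank (map_mx pi A) = s by move: (rank_leq_row (map_mx pi A)) corank1; lia.
have [i0 [J minor_unit]] := corank1_minor_unit rkA.
have {}minor_unit : row' i0 (colsub J A) \in unitmx.
  by rewrite -(residue_unitmx _ piR) map_row' map_mxsub.
apply: (free_rank1_left_kernel minor_unit (v := minor_vector A J)).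
  exact/minor_vector_ker/det_colsub_eq0.
by rewrite mxE unitrMr ?unitrX ?unitrN1 // -unitmxE.
Qed.
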